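(* Let $P\subset\mathbb{R}^d$ be a finite set, let $r$ be the radius of the minimum enclosing ball of $P$, and let $M$ be a maximum-weight matching of $P$ (i.e. a matching attaining $\operatorname{opt}_{\mathrm{max\text{-}match}}(P)$). Then there exists a ball of radius $r/2$ that contains both endpoints $p,q$ of every pair $\{p,q\}\in M$ with $\|p-q\|\le r/4$.
   Context: Norms are Euclidean. A matching of $P$ is a matching in the complete graph on $P$, with weight $\sum_{\{p,q\}\in M}\|p-q\|$; $\operatorname{opt}_{\mathrm{max\text{-}match}}(P)$ is the maximum weight over all matchings of $P$. *)

From HB Require Import structures.
From mathcomp Require Import all_boot all_order all_algebra.
From mathcomp Require Import reals.
Set Implicit Arguments. Unset Strict Implicit. Unset Printing Implicit Defensive.
Import Order.TTheory GRing.Theory Num.Theory.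
Local Open Scope ring_scope.

Section Defs.
Variables (R : realType) (d : nat).
Notation pt := 'rV[R]_d.

Definition edist (x y : pt) : R := Num.sqrt (\sum_(i < d) (x 0 i - y 0 i) ^+ 2).

Definition in_ball (c : pt) (r : R) (x : pt) : Prop := edist c x <= r.

Definition is_meb_radius (P : seq pt) (r : R) : Prop :=
  [/\ 0 <= r,
      exists c : pt, forall p, p \in P -> in_ball c r p
    & forall (c : pt) (r' : R), 0 <= r' ->
        (forall p, p \in P -> in_ball c r' p) -> r <= r'].

(* A matching of P: a list of edges {p,q} (stored as pairs), p, q in P,
   p <> q, with all endpoints distinct (edges pairwise disjoint, no repeats). *)
Definition is_matching (P : seq pt) (M : seq (pt * pt)) : Prop :=
  all (fun e => [&& e.1 \in P, e.2 \in P & e.1 != e.2]) M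
  /\ uniq (flatten [seq [:: e.1; e.2] | e <- M]).

Definition match_weight (M : seq (pt * pt)) : R :=
  \sum_(e <- M) edist e.1 e.2.

Definition is_max_matching (P : seq pt) (M : seq (pt * pt)) : Prop :=
  is_matching P M /\
  forall M', is_matching P M' -> match_weight M' <= match_weight M.

End Defs.

From HB Require Import structures.
From mathcomp Require Import all_boot all_order all_algebra.
From mathcomp Require Import reals.
From mathcomp Require Import lra zify.
Import Order.TTheory GRing.Theory Num.Theory.
Local Open Scope ring_scope.

(* Exchange argument: if {a,b} and {p,q} are edges of a maximum-weight
   matching, re-pairing them as {a,p},{b,q} (or {a,q},{b,p}) cannot increase
   the weight, so d(a,p) <= d(a,b) + d(p,q).  When both edges have length at
   most r/4, every endpoint of a short edge lies within r/2 of the endpoint a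
   of one fixed short edge, which is therefore the centre of the ball.  Only
   the nonnegativity of r is taken from the enclosing ball. *)

Section MaxMatching.
Local Set Implicit Arguments.
Local Unset Strict Implicit.

Lemma perm_to_rem2 (T : eqType) (s : seq T) (x y : T) :
  x \in s -> y \in s -> y != x -> perm_eq s (x :: y :: rem y (rem x s)).
Proof.
move=> xs ys yx; apply: perm_trans (perm_to_rem xs) _; rewrite perm_cons.
exact/perm_to_rem/rem_mem.
Qed.

Variables (R : realType) (d : nat).
Notation pt := 'rV[R]_d.
Implicit Types (P : seq pt) (M : seq (pt * pt)).

Lemma edist_ge0 (x y : pt) : 0 <= edist x y.
Proof. exact: sqrtr_ge0. Qed.

Lemma edistxx (x : pt) : edist x x = 0.
Proof. by rewrite /edist big1 ?sqrtr0 // => i _; rewrite subrr expr0n. Qed.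

Definition endpoints M : seq pt := flatten [seq [:: e.1; e.2] | e <- M].

Lemma perm_endpoints M M' : perm_eq M M' -> perm_eq (endpoints M) (endpoints M').
Proof. by move=> pM; apply/perm_flatten/perm_map. Qed.

Lemma is_matching_perm P M M' :
  perm_eq M M' -> is_matching P M -> is_matching P M'.
Proof.
move=> pM [hall huniq]; split; first by rewrite -(perm_all _ pM).
by rewrite -(perm_uniq (perm_endpoints pM)).
Qed.

Lemma match_weight_perm M M' : perm_eq M M' -> match_weight M = match_weight M'.
Proof. exact: perm_big. Qed.

Lemma is_matching_swap P a b p q x y rest :
  perm_eq [:: x; y] [:: p; q] ->
  is_matching P ((a, b) :: (p, q) :: rest) ->
  is_matching P ((a, x) :: (b, y) :: rest).
Proof.
move=> pxy [hall huniq].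
case/and3P: hall => /and3P[aP bP _] /and3P[pP qP _] hrest.
have ends_perm : perm_eq (endpoints ((a, x) :: (b, y) :: rest))
                         (endpoints ((a, b) :: (p, q) :: rest)).
  apply/permP => f; move/permP: pxy => /(_ f) /=.
  by set n := count _ (endpoints rest); clear; lia.
have huniq' : uniq (endpoints ((a, x) :: (b, y) :: rest)).
  by rewrite (perm_uniq ends_perm).
have [ax b_y] : a != x /\ b != y.
  move: huniq' => /= /and4P[ha _ hb _].
  by move: ha hb; rewrite !inE !negb_or => /andP[-> _] /andP[-> _].
have xyP z : z \in [:: x; y] -> z \in P.
  by rewrite (perm_mem pxy) !inE => /orP[]/eqP->.
split=> //; apply/and3P; split=> //; apply/and3P; split=> //; apply: xyP.
  exact: mem_head.
by rewrite !inE eqxx orbT.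
Qed.

Lemma max_matching_swap P M a b p q x y rest :
  is_max_matching P M ->
  perm_eq M ((a, b) :: (p, q) :: rest) ->
  perm_eq [:: x; y] [:: p; q] ->
  edist a x + edist b y <= edist a b + edist p q.
Proof.
move=> [hM hmax] pM pxy.
have := hmax _ (is_matching_swap pxy (is_matching_perm pM hM)).
by rewrite (match_weight_perm pM) /match_weight !big_cons !addrA lerD2r.
Qed.

Lemma max_matching_short_edges P M eps a b p q :
  is_max_matching P M -> (a, b) \in M -> (p, q) \in M ->
  edist a b <= eps -> edist p q <= eps ->
  edist a p <= eps + eps /\ edist a q <= eps + eps.
Proof.
move=> hM abM pqM hab hpq.
have eps0 : 0 <= eps := le_trans (edist_ge0 a b) hab.
have [[-> ->]|ne] := eqVneq (p, q) (a, b).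
  by rewrite edistxx addr_ge0 //; split=> //; lra.
have pM := perm_to_rem2 abM pqM ne.
have hp := max_matching_swap hM pM (perm_refl [:: p; q]).
have hq : edist a q + edist b p <= edist a b + edist p q.
  by apply: (max_matching_swap hM pM); apply/permP => f /=; rewrite addnCA.
have := edist_ge0 b p; have := edist_ge0 b q.
by split; lra.
Qed.

End MaxMatching.

Theorem mainTheorem3 (R : realType) (d : nat) (P : seq 'rV[R]_d) (r : R)
    (M : seq ('rV[R]_d * 'rV[R]_d)) :
  is_meb_radius P r ->
  is_max_matching P M ->
  exists c : 'rV[R]_d,
    forall e, e \in M -> edist e.1 e.2 <= r / 4 ->
      in_ball c (r / 2) e.1 /\ in_ball c (r / 2) e.2.
Proof.
move=> [r0 _ _] hM.
have r2 : r / 2 = r / 4 + r / 4 by lra.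
have [/hasP[[a b] abM /= hab]|/hasPn noshort] :=
  boolP (has (fun e => edist e.1 e.2 <= r / 4) M); last first.
  by exists 0 => e /noshort /negP.
exists a => -[p q] pqM /= hpq; rewrite /in_ball r2.
exact: max_matching_short_edges hM abM pqM hab hpq.
Qed.
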